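(* For a multiplicative Lie algebra $G$: (1) $(Z(G)\otimes G)(G\otimes Z(G))\subseteq Z(G\otimes G)$; (2) $(LZ(G)\otimes G)(G\otimes LZ(G))\subseteq LZ(G\otimes G)$; (3) $(\mathcal Z(G)\otimes G)(G\otimes\mathcal Z(G))\subseteq\mathcal Z(G\otimes G)$.
   Context: A multiplicative Lie algebra is a group $(G,\cdot)$ with a binary operation $\star$ such that for all $x,y,z\in G$: $x\star x=1$; $x\star(yz)=(x\star y)\,{}^y(x\star z)$; $(xy)\star z={}^x(y\star z)(x\star z)$; $((x\star y)\star{}^yz)((y\star z)\star{}^zx)((z\star x)\star{}^xy)=1$; ${}^z(x\star y)={}^zx\star{}^zy$, where ${}^xy=xyx^{-1}$. $Z(G)$ is the group center, $LZ(G)=\{x: x\star y=1\ \forall y\}$, $\mathcal Z(G)=LZ(G)\cap Z(G)$. The tensor square $G\otimes G$ is the multiplicative Lie algebra generated by symbols $x\otimes y$ ($x,y\in G$) subject to, for all $x,x',y,y'\in G$: $x\otimes(yy')=(x\otimes y)({}^yx\otimes{}^yy')$; $(xx')\otimes y=({}^xx'\otimes{}^xy)(x\otimes y)$; $((x\star x')\otimes{}^{x'}y)({}^yx\otimes(x'\star y))^{-1}({}^xx'\otimes(x\star y)^{-1})^{-1}=1$; $({}^{y'}x\otimes(y\star y'))((y\star x)^{-1}\otimes{}^yy')^{-1}((y'\star x)\otimes{}^xy)^{-1}=1$; and $(x\otimes y)\star(x'\otimes y')=(y\star x)^{-1}\otimes(x'\star y')$. For an ideal $A$ of $G$, $A\otimes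 G$ (resp. $G\otimes A$) is the subgroup of $G\otimes G$ generated by all $a\otimes b$ with $a\in A,b\in G$ (resp. $a\in G,b\in A$). *)

Set Implicit Arguments.

(* Conjugation  ^x y = x y x^{-1}  is written out as mul (mul x y) (inv x). *)
Record MLie := {
  car :> Type;
  mul : car -> car -> car;
  one : car;
  inv : car -> car;
  star : car -> car -> car;
  mulA : forall x y z, mul x (mul y z) = mul (mul x y) z;
  mul1g : forall x, mul one x = x;
  mulVg : forall x, mul (inv x) x = one;
  star_xx : forall x, star x x = one;
  star_mulr : forall x y z,
    star x (mul y z) = mul (star x y) (mul (mul y (star x z)) (inv y));
  star_mull : forall x y z,
    star (mul x y) z = mul (mul (mul x (star y z)) (inv x)) (star x z);
  star_jacobi : forall x y z,
    mul (mul (star (star x y) (mul (mul y z) (inv y)))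
             (star (star y z) (mul (mul z x) (inv z))))
        (star (star z x) (mul (mul x y) (inv x))) = one;
  star_conj : forall x y z,
    mul (mul z (star x y)) (inv z)
    = star (mul (mul z x) (inv z)) (mul (mul z y) (inv z))
}.

Arguments mul {m}.
Arguments one {m}.
Arguments inv {m}.
Arguments star {m}.

Definition cj {G : MLie} (x y : G) : G := mul (mul x y) (inv x).

Definition Zc (G : MLie) (x : G) : Prop := forall y : G, mul x y = mul y x.
Definition LZ (G : MLie) (x : G) : Prop := forall y : G, star x y = one.
Definition calZ (G : MLie) (x : G) : Prop := LZ G x /\ Zc G x.

Definition is_hom (G H : MLie) (f : G -> H) : Prop :=
  (forall x y : G, f (mul x y) = mul (f x) (f y)) /\
  (forall x y : G, f (star x y) = star (f x) (f y)).

Definition tensor_rels (G T : MLie) (t : G -> G -> T) : Prop :=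
  (forall x y y' : G, t x (mul y y') = mul (t x y) (t (cj y x) (cj y y'))) /\
  (forall x x' y : G, t (mul x x') y = mul (t (cj x x') (cj x y)) (t x y)) /\
  (forall x x' y : G,
     mul (mul (t (star x x') (cj x' y)) (inv (t (cj y x) (star x' y))))
         (inv (t (cj x x') (inv (star x y)))) = one) /\
  (forall x y y' : G,
     mul (mul (t (cj y' x) (star y y')) (inv (t (inv (star y x)) (cj y y'))))
         (inv (t (star y' x) (cj x y))) = one) /\
  (forall x x' y y' : G,
     star (t x y) (t x' y') = t (inv (star y x)) (star x' y')).

(* (T, t) is THE tensor square G ⊗ G: the multiplicative Lie algebra presented
   by generators x ⊗ y and the relations above, characterized by its
   universal property (initial among multiplicative Lie algebras with a map
   satisfying the relations). *)
Definition is_tensor_square (G T : MLie) (t : G -> G -> T) : Prop :=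
  tensor_rels G T t /\
  forall (M : MLie) (s : G -> G -> M), tensor_rels G M s ->
    exists f : T -> M, is_hom T M f /\ (forall x y, f (t x y) = s x y) /\
      forall g : T -> M, is_hom T M g -> (forall x y, g (t x y) = s x y) ->
        forall z, g z = f z.

Inductive gen (T : MLie) (S : T -> Prop) : T -> Prop :=
  | gen_in : forall x, S x -> gen T S x
  | gen_one : gen T S one
  | gen_mul : forall x y, gen T S x -> gen T S y -> gen T S (mul x y)
  | gen_inv : forall x, gen T S x -> gen T S (inv x).

(* A ⊗ G and G ⊗ A as subgroups of T = G ⊗ G *)
Definition tensL (G T : MLie) (t : G -> G -> T) (A : G -> Prop) : T -> Prop :=
  gen T (fun w => exists a b, A a /\ w = t a b).
Definition tensR (G T : MLie) (t : G -> G -> T) (A : G -> Prop) : T -> Prop :=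
  gen T (fun w => exists a b, A b /\ w = t a b).

Definition setmul (T : MLie) (H K : T -> Prop) : T -> Prop :=
  fun w => exists h k, H h /\ K k /\ w = mul h k.

Definition subset {X : Type} (A B : X -> Prop) : Prop := forall x, A x -> B x.

From Stdlib Require Import ProofIrrelevance.

(* Every element of G ⊗ G is a group word in pure tensors x ⊗ y: the pure
   tensors generate a sub-multiplicative-Lie-algebra satisfying the defining
   relations, and uniqueness in the universal property forces it to be
   everything.  Centralizers and ⋆-annihilators are subgroups, so it suffices
   to test the generators z ⊗ y, x ⊗ z of each ideal against pure tensors.
   For z central, expanding (z a) ⊗ (h b) by the two bilinearity relations in
   either order shows that z ⊗ h commutes with every pure tensor, and likewise
   for x ⊗ z.  For z in LZ(G), the relation (z ⊗ y) ⋆ (x' ⊗ y') =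
   (y ⋆ z)^-1 ⊗ (x' ⋆ y') gives 1 ⊗ (x' ⋆ y') = 1, using y ⋆ z = (z ⋆ y)^-1. *)

Section GroupTheory.
Variable M : MLie.
Implicit Types a b c d x y z : M.

Lemma mulgV x : mul x (inv x) = one.
Proof.
  rewrite <- (mul1g M (mul x (inv x))), <- (mulVg M (inv x)), <- !mulA,
    (mulA _ _ x), mulVg, mul1g.
  reflexivity.
Qed.

Lemma mulg1 x : mul x one = x.
Proof. rewrite <- (mulVg M x), mulA, mulgV, mul1g. reflexivity. Qed.

Lemma mulgK x y : mul (mul y x) (inv x) = y.
Proof. rewrite <- mulA, mulgV, mulg1. reflexivity. Qed.

Lemma mulgKV x y : mul (mul y (inv x)) x = y.
Proof. rewrite <- mulA, mulVg, mulg1. reflexivity. Qed.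

Lemma mulgI x y z : mul x y = mul x z -> y = z.
Proof.
  intro E. rewrite <- (mul1g M y), <- (mul1g M z), <- (mulVg M x), <- !mulA, E.
  reflexivity.
Qed.

Lemma mulIg x y z : mul y x = mul z x -> y = z.
Proof. intro E. rewrite <- (mulgK x y), <- (mulgK x z), E. reflexivity. Qed.

Lemma invg1 : inv (@one M) = one.
Proof. rewrite <- (mulg1 (inv one)), mulVg. reflexivity. Qed.

Lemma mulg_eq1_inv x y : mul x y = one -> y = inv x.
Proof. intro E. apply (mulgI x). rewrite E, mulgV. reflexivity. Qed.

Lemma mulgg_eq x : mul x x = x -> x = one.
Proof. intro E. apply (mulgI x). rewrite E, mulg1. reflexivity. Qed.

Lemma commute_of_mid_swap a b c d :
  mul (mul (mul a b) c) d = mul (mul (mul a c) b) d -> mul b c = mul c b.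
Proof. intro E. apply mulIg in E. rewrite <- !mulA in E. exact (mulgI a _ _ E). Qed.

Lemma cj1g x : cj one x = x.
Proof. unfold cj. rewrite mul1g, invg1, mulg1. reflexivity. Qed.

Lemma cjg1 x : cj x one = one.
Proof. unfold cj. rewrite mulg1, mulgV. reflexivity. Qed.

Lemma cjM x y z : cj x (mul y z) = mul (cj x y) (cj x z).
Proof. unfold cj. rewrite !mulA, mulgKV. reflexivity. Qed.

Lemma cjK x y : cj (inv x) (cj x y) = y.
Proof. unfold cj. rewrite !mulA, mulVg, mul1g, mulgK. reflexivity. Qed.

Lemma cjKV x y : cj x (cj (inv x) y) = y.
Proof. unfold cj. rewrite !mulA, mulgV, mul1g, mulgKV. reflexivity. Qed.

Lemma cj_eq1 x y : cj x y = one -> y = one.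
Proof. intro E. rewrite <- (cjK x y), E, cjg1. reflexivity. Qed.

Lemma cj_Zcl z x : Zc M z -> cj z x = x.
Proof. intro Hz. unfold cj. rewrite Hz, mulgK. reflexivity. Qed.

Lemma cj_Zcr z x : Zc M z -> cj x z = z.
Proof. intro Hz. unfold cj. rewrite <- Hz, mulgK. reflexivity. Qed.

Lemma star1g x : star one x = one.
Proof.
  apply mulgg_eq. pose proof (star_mull M one one x) as E.
  rewrite mul1g, mul1g, invg1, mulg1 in E. symmetry. exact E.
Qed.

Lemma starg1 x : star x one = one.
Proof.
  apply mulgg_eq. pose proof (star_mulr M x one one) as E.
  rewrite mul1g, mul1g, invg1, mulg1 in E. symmetry. exact E.
Qed.

Lemma starVg x y : star (inv x) y = inv (cj (inv x) (star x y)).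
Proof.
  apply mulg_eq1_inv. unfold cj. rewrite <- star_mull, mulVg. apply star1g.
Qed.

Lemma stargV x y : star x (inv y) = cj (inv y) (inv (star x y)).
Proof.
  rewrite <- (cjK y (star x (inv y))). f_equal. apply mulg_eq1_inv.
  unfold cj. rewrite <- star_mulr, mulgV. apply starg1.
Qed.

(* Expand [star (x y) (x y) = 1] by both bilinearity rules. *)
Lemma star_swap x y : star x y = inv (star y x).
Proof.
  apply mulg_eq1_inv.
  pose proof (star_xx M (mul x y)) as E.
  rewrite star_mull, (star_mulr M y x y), (star_mulr M x x y), !star_xx in E.
  rewrite mulg1, mulgV, mulg1, mul1g in E. fold (cj x (star y x)) (cj x (star x y)) in E.
  rewrite <- cjM in E. exact (cj_eq1 _ _ E).
Qed.

Definition group_closed (P : M -> Prop) : Prop :=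
  P one /\ (forall x y, P x -> P y -> P (mul x y)) /\ (forall x, P x -> P (inv x)).

Definition star_closed (P : M -> Prop) : Prop :=
  forall x y, P x -> P y -> P (star x y).

Lemma gen_closed S : group_closed (gen M S).
Proof. split; [|split]; [apply gen_one | apply gen_mul | apply gen_inv]. Qed.

Lemma gen_cj S x y : gen M S x -> gen M S y -> gen M S (cj x y).
Proof. intros. unfold cj. apply gen_mul; [apply gen_mul | apply gen_inv]; assumption. Qed.

Lemma gen_sub_closed S P : group_closed P -> subset S P -> subset (gen M S) P.
Proof.
  intros [P1 [PM PV]] SP x Hx.
  induction Hx; [apply SP | apply P1 | apply PM | apply PV]; assumption.
Qed.

Lemma setmul_sub_closed H K P :
  group_closed P -> subset H P -> subset K P -> subset (setmul M H K) P.
Proof.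
  intros [_ [PM _]] HP KP w [h [k [Hh [Hk ->]]]]. apply PM; auto.
Qed.

Lemma centralizer_closed c : group_closed (fun v => mul c v = mul v c).
Proof.
  split; [|split].
  - rewrite mul1g, mulg1. reflexivity.
  - intros x y Ex Ey. rewrite mulA, Ex, <- mulA, Ey, mulA. reflexivity.
  - intros x Ex. apply (mulgI x). rewrite mulA, <- Ex, mulgK, mulA, mulgV, mul1g.
    reflexivity.
Qed.

Lemma star_annihilator_closed c : group_closed (fun v => star c v = one).
Proof.
  split; [|split].
  - apply starg1.
  - intros x y Ex Ey. rewrite star_mulr, Ex, Ey, mulg1, mulgV, mul1g. reflexivity.
  - intros x Ex. rewrite stargV, Ex, invg1, cjg1. reflexivity.
Qed.

Lemma Zc_closed : group_closed (Zc M).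
Proof.
  split; [|split].
  - intro y. rewrite mul1g, mulg1. reflexivity.
  - intros x y Hx Hy w. rewrite <- mulA, Hy, mulA, Hx, mulA. reflexivity.
  - intros x Hx y. symmetry. apply (centralizer_closed y). symmetry. apply Hx.
Qed.

Lemma LZ_closed : group_closed (LZ M).
Proof.
  split; [|split].
  - intro y. apply star1g.
  - intros x y Hx Hy z. rewrite star_mull, Hx, Hy, !mulg1, mulgV. reflexivity.
  - intros x Hx z. rewrite starVg, Hx, cjg1, invg1. reflexivity.
Qed.

Lemma calZ_closed : group_closed (calZ M).
Proof.
  destruct LZ_closed as [L1 [LM LV]], Zc_closed as [Z1 [ZM ZV]].
  split; [|split].
  - split; assumption.
  - intros x y [] []. split; auto.
  - intros x []. split; auto.
Qed.

Lemma Zc_of_gen S c :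
  (forall v, gen M S v) -> (forall s, S s -> mul c s = mul s c) -> Zc M c.
Proof.
  intros HS Hc v. exact (gen_sub_closed _ _ (centralizer_closed c) Hc v (HS v)).
Qed.

Lemma LZ_of_gen S c :
  (forall v, gen M S v) -> (forall s, S s -> star c s = one) -> LZ M c.
Proof.
  intros HS Hc v. exact (gen_sub_closed _ _ (star_annihilator_closed c) Hc v (HS v)).
Qed.

End GroupTheory.

Section SubMLie.
Variables (M : MLie) (P : M -> Prop).
Hypotheses (HP : group_closed M P) (HPs : star_closed M P).

Definition sub_MLie : MLie.
Proof.
  refine {| car := {x | P x};
    mul := fun u v => exist P (mul (proj1_sig u) (proj1_sig v))
                        (proj1 (proj2 HP) _ _ (proj2_sig u) (proj2_sig v));
    one := exist P one (proj1 HP);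
    inv := fun u => exist P (inv (proj1_sig u)) (proj2 (proj2 HP) _ (proj2_sig u));
    star := fun u v => exist P (star (proj1_sig u) (proj1_sig v))
                        (HPs _ _ (proj2_sig u) (proj2_sig v)) |};
  intros; repeat match goal with u : {x | P x} |- _ => destruct u end;
  apply subset_eq_compat.
  - apply mulA.
  - apply mul1g.
  - apply mulVg.
  - apply star_xx.
  - apply star_mulr.
  - apply star_mull.
  - apply star_jacobi.
  - apply star_conj.
Defined.

End SubMLie.

Section TensorRelations.
Variables (G T : MLie) (t : G -> G -> T).
Hypothesis Ht : tensor_rels G T t.

Definition pure_tensor (w : T) : Prop := exists a b, w = t a b.

Lemma tensor_mull x x' y : t (mul x x') y = mul (t (cj x x') (cj x y)) (t x y).
Proof. apply Ht. Qed.

Lemma tensor_mulr x y y' : t x (mul y y') = mul (t x y) (t (cj y x) (cj y y')).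
Proof. apply Ht. Qed.

Lemma star_tensor a b x y : star (t a b) (t x y) = t (inv (star b a)) (star x y).
Proof. apply Ht. Qed.

Lemma tensor1g y : t one y = one.
Proof.
  apply mulgg_eq. pose proof (tensor_mull one one y) as E.
  rewrite mulg1, !cj1g in E. symmetry. exact E.
Qed.

Lemma gen_pure_tensor_star_closed : star_closed T (gen T pure_tensor).
Proof.
  assert (Hr : forall g y, pure_tensor g -> gen T pure_tensor y ->
                 gen T pure_tensor (star g y)).
  { intros g y [a [b ->]] Hy. induction Hy as [w [x [y ->]] | | x y | x].
    - apply gen_in. rewrite star_tensor. do 2 eexists. reflexivity.
    - rewrite starg1. apply gen_one.
    - rewrite star_mulr. apply gen_mul; [| apply gen_cj]; assumption.
    - rewrite stargV. apply gen_cj; apply gen_inv; assumption. }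
  intros x y Hx Hy. induction Hx as [x Hx | | x x' | x].
  - auto.
  - rewrite star1g. apply gen_one.
  - rewrite star_mull. apply gen_mul; [apply gen_cj |]; assumption.
  - rewrite starVg. apply gen_inv, gen_cj; [apply gen_inv |]; assumption.
Qed.

Lemma tensor_mulZl z x y : Zc G z -> t (mul z x) y = mul (t x y) (t z y).
Proof. intro Hz. rewrite tensor_mull, !cj_Zcl by exact Hz. reflexivity. Qed.

Lemma tensor_mulZr z x y : Zc G z -> t x (mul z y) = mul (t x z) (t x y).
Proof. intro Hz. rewrite tensor_mulr, !cj_Zcl by exact Hz. reflexivity. Qed.

Lemma tensor_Zcl_commute z h a b : Zc G z -> mul (t z h) (t a b) = mul (t a b) (t z h).
Proof.
  intro Hz. rewrite <- (cjKV G h a), <- (cjKV G h b).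
  set (a' := cj (inv h) a). set (b' := cj (inv h) b).
  apply (commute_of_mid_swap T (t a' h) _ _ (t z (cj h b'))).
  transitivity (t (mul z a') (mul h b')).
  - rewrite tensor_mulr, cjM, (cj_Zcr G z), !(tensor_mulZl z) by exact Hz.
    rewrite !mulA. reflexivity.
  - rewrite (tensor_mulZl z), !tensor_mulr, (cj_Zcr G z) by exact Hz.
    rewrite !mulA. reflexivity.
Qed.

Lemma tensor_Zcr_commute g z a b : Zc G z -> mul (t g z) (t a b) = mul (t a b) (t g z).
Proof.
  intro Hz. rewrite <- (cjKV G g a), <- (cjKV G g b).
  set (a' := cj (inv g) a). set (b' := cj (inv g) b).
  apply (commute_of_mid_swap T (t (cj g a') z) _ _ (t g b')).
  transitivity (t (mul g a') (mul z b')).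
  - rewrite (tensor_mulZr z), !tensor_mull, (cj_Zcr G z) by exact Hz.
    rewrite !mulA. reflexivity.
  - rewrite tensor_mull, cjM, (cj_Zcr G z), !(tensor_mulZr z) by exact Hz.
    rewrite !mulA. reflexivity.
Qed.

Lemma tensor_LZl_star a b x y : LZ G a -> star (t a b) (t x y) = one.
Proof.
  intro Ha. rewrite star_tensor, (star_swap G b a), Ha, !invg1. apply tensor1g.
Qed.

Lemma tensor_LZr_star a b x y : LZ G b -> star (t a b) (t x y) = one.
Proof. intro Hb. rewrite star_tensor, Hb, invg1. apply tensor1g. Qed.

End TensorRelations.

Arguments pure_tensor {G T}.

Section TensorSquare.
Variables (G T : MLie) (t : G -> G -> T).
Hypothesis HT : is_tensor_square G T t.

Lemma tensor_square_generated v : gen T (pure_tensor t) v.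
Proof.
  destruct HT as [HR HU].
  pose (S := sub_MLie T (gen T (pure_tensor t)) (gen_closed T (pure_tensor t))
               (gen_pure_tensor_star_closed G T t HR)).
  pose (s := fun x y => exist (gen T (pure_tensor t)) (t x y)
               (gen_in _ _ _ (ex_intro _ x (ex_intro _ y eq_refl))) : S).
  assert (Hs : tensor_rels G S s).
  { destruct HR as [R1 [R2 [R3 [R4 R5]]]].
    repeat split; intros; apply subset_eq_compat;
      [apply R1 | apply R2 | apply R3 | apply R4 | apply R5]. }
  destruct (HU S s Hs) as [f [[fM fS] [ft _]]].
  destruct (HU T t HR) as [id_T [_ [_ uniq]]].
  assert (id_eq : v = id_T v).
  { apply (uniq (fun v => v)); [split |]; reflexivity. }
  assert (f_eq : proj1_sig (f v) = id_T v).
  { apply (uniq (fun v => proj1_sig (f v))).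
    - split; intros; [rewrite fM | rewrite fS]; reflexivity.
    - intros. rewrite ft. reflexivity. }
  rewrite id_eq, <- f_eq. apply proj2_sig.
Qed.

Lemma tensor_Zcl a b : Zc G a -> Zc T (t a b).
Proof.
  intro Ha. apply (Zc_of_gen T _ _ tensor_square_generated).
  intros w [x [y ->]]. exact (tensor_Zcl_commute G T t (proj1 HT) _ _ _ _ Ha).
Qed.

Lemma tensor_Zcr a b : Zc G b -> Zc T (t a b).
Proof.
  intro Hb. apply (Zc_of_gen T _ _ tensor_square_generated).
  intros w [x [y ->]]. exact (tensor_Zcr_commute G T t (proj1 HT) _ _ _ _ Hb).
Qed.

Lemma tensor_LZl a b : LZ G a -> LZ T (t a b).
Proof.
  intro Ha. apply (LZ_of_gen T _ _ tensor_square_generated).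
  intros w [x [y ->]]. exact (tensor_LZl_star G T t (proj1 HT) _ _ _ _ Ha).
Qed.

Lemma tensor_LZr a b : LZ G b -> LZ T (t a b).
Proof.
  intro Hb. apply (LZ_of_gen T _ _ tensor_square_generated).
  intros w [x [y ->]]. exact (tensor_LZr_star G T t (proj1 HT) _ _ _ _ Hb).
Qed.

Lemma tensor_calZl a b : calZ G a -> calZ T (t a b).
Proof. intros [HL HZ]. split; [apply tensor_LZl | apply tensor_Zcl]; assumption. Qed.

Lemma tensor_calZr a b : calZ G b -> calZ T (t a b).
Proof. intros [HL HZ]. split; [apply tensor_LZr | apply tensor_Zcr]; assumption. Qed.

End TensorSquare.

Lemma tens_setmul_sub_closed (G T : MLie) (t : G -> G -> T) (A : G -> Prop)
    (P : T -> Prop) :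
  group_closed T P -> (forall a b, A a -> P (t a b)) -> (forall a b, A b -> P (t a b)) ->
  subset (setmul T (tensL G T t A) (tensR G T t A)) P.
Proof.
  intros HP HAl HAr.
  apply setmul_sub_closed; [exact HP | |]; apply gen_sub_closed; try exact HP;
    intros w [a [b [Ha ->]]]; auto.
Qed.

Theorem lemma3p3 (G T : MLie) (t : G -> G -> T)
  (HT : is_tensor_square G T t) :
  subset (setmul T (tensL G T t (Zc G)) (tensR G T t (Zc G))) (Zc T) /\
  subset (setmul T (tensL G T t (LZ G)) (tensR G T t (LZ G))) (LZ T) /\
  subset (setmul T (tensL G T t (calZ G)) (tensR G T t (calZ G))) (calZ T).
Proof.
  split; [|split]; apply tens_setmul_sub_closed.
  - apply Zc_closed.
  - exact (tensor_Zcl G T t HT).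
  - exact (tensor_Zcr G T t HT).
  - apply LZ_closed.
  - exact (tensor_LZl G T t HT).
  - exact (tensor_LZr G T t HT).
  - apply calZ_closed.
  - exact (tensor_calZl G T t HT).
  - exact (tensor_calZr G T t HT).
Qed.
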